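(* The relation $\le^{\oplus}$ on $\mathrm{Eq}$ is antisymmetric and transitive; consequently $<^{\oplus}$ (defined by $C_1<^{\oplus}C_2$ iff $C_1\le^{\oplus}C_2$ and $C_1\neq C_2$) is a strict partial order on $\mathrm{Eq}$.
   Context: $G=G[Q]$ is the query graph of a Boolean CQ without self-joins whose atoms are $R(u,v)$ with first attribute the key: vertices are variables, and each atom gives an edge $e_R=(u_R,v_R)$, consistent or inconsistent according to the type of $R$; $E^i$ is the set of inconsistent edges. $x\to y$ means there is a directed path (possibly with zero edges) from $x$ to $y$ all of whose edges are consistent; $u^{\oplus}=\{v: u\to v\}$; $u^+$ is the set of vertices reachable from $u$ by any directed path. For $R,S\in E^i$, $R\sim S$ iff $u_S\in u_R^+$ and $u_R\in u_S^+$. $\mathrm{Eq}$ is the set of $\sim$-equivalence classes of $E^i$. For $C\in\mathrm{Eq}$, $C^{\oplus}=\bigcap_{R\in C}u_R^{\oplus}$. For $C_1,C_2\in\mathrm{Eq}$, $C_1\le^{\oplus}C_2$ iff there exists $S\in C_2$ with $u_S\in C_1^{\oplus}$. *)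

From mathcomp Require Import all_boot.
Set Implicit Arguments. Unset Strict Implicit. Unset Printing Implicit Defensive.

(* A query graph: variables V, atoms A (one per relation name; no self-joins),
   atom R(u_R, v_R) gives the edge (u R, v R); [isc R] is true iff R is
   consistent. *)
Section QueryGraph.
Variables (V A : finType) (u v : A -> V) (isc : A -> bool).

Definition cedge : rel V := fun x y => [exists R, [&& isc R, u R == x & v R == y]].
Definition anyedge : rel V := fun x y => [exists R, (u R == x) && (v R == y)].

Definition carrow (x y : V) : bool := connect cedge x y.
Definition uplus_c (x : V) : {set V} := [set y | carrow x y].
Definition uplus (x : V) : {set V} := [set y | connect anyedge x y].

Definition Ei : {set A} := [set R | ~~ isc R].

Definition sim (R S : A) : bool := (u S \in uplus (u R)) && (u R \in uplus (u S)).

Definition Eq : {set {set A}} := [set [set S in Ei | sim R S] | R in Ei].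

Definition Cplus (C : {set A}) : {set V} := \bigcap_(R in C) uplus_c (u R).

Definition le_plus (C1 C2 : {set A}) : bool := [exists S in C2, u S \in Cplus C1].

Definition lt_plus (C1 C2 : {set A}) : bool := le_plus C1 C2 && (C1 != C2).

End QueryGraph.

From mathcomp Require Import all_boot.
Set Implicit Arguments. Unset Strict Implicit. Unset Printing Implicit Defensive.

(* Transitivity holds for arbitrary sets of atoms: if u_S lies in C1^oplus
   (S in C2) and u_T lies in C2^oplus (T in C3), then every u_R with R in C1
   reaches u_S and u_S reaches u_T by consistent paths, so u_T is in C1^oplus.

   Antisymmetry uses that the elements of Eq are ~-classes.  Mutual
   comparability yields S in C2 and T in C1 joined by consistent paths in both
   directions; consistent paths are paths, so S ~ T, and since ~ is symmetric
   and transitive the classes of S and T, i.e. C2 and C1, coincide.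

   The properties of <^oplus then follow formally: irreflexivity is built into
   its definition, and transitivity combines both facts above. *)

Section PlusOrder.
Variables (V A : finType) (u v : A -> V) (isc : A -> bool).

Definition sim_class (R : A) : {set A} := [set S in Ei isc | sim u v R S].

Lemma EqP C :
  C \in Eq u v isc -> exists2 R, R \in Ei isc & C = sim_class R.
Proof. by case/imsetP => R HR ->; exists R. Qed.

Lemma sim_classP R S : S \in sim_class R -> sim u v R S.
Proof. by rewrite inE => /andP []. Qed.

Lemma carrow_connect x y : carrow u v isc x y -> connect (anyedge u v) x y.
Proof.
apply: connect_sub => a b /existsP [R /and3P [_ uR vR]].
by apply: connect1; apply/existsP; exists R; rewrite uR vR.
Qed.

Lemma sim_sym R S : sim u v R S -> sim u v S R.
Proof. by rewrite /sim andbC. Qed.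

Lemma sim_trans R S T : sim u v R S -> sim u v S T -> sim u v R T.
Proof.
rewrite /sim /uplus !inE => /andP [RS SR] /andP [ST TS].
by rewrite (connect_trans RS ST) (connect_trans TS SR).
Qed.

Lemma carrow_sim R S :
  carrow u v isc (u R) (u S) -> carrow u v isc (u S) (u R) -> sim u v R S.
Proof. by move=> RS SR; rewrite /sim /uplus !inE !carrow_connect. Qed.

Lemma sim_class_eq R S : sim u v R S -> sim_class R = sim_class S.
Proof.
move=> RS; apply/setP => T; rewrite !inE.
apply/andb_id2l => _; apply/idP/idP => [RT|ST].
- exact: sim_trans (sim_sym RS) RT.
- exact: sim_trans RS ST.
Qed.

Lemma le_plusP C1 C2 :
  le_plus u v isc C1 C2 ->
  exists2 S, S \in C2 & forall R, R \in C1 -> carrow u v isc (u R) (u S).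
Proof.
case/existsP => S /andP [HS /bigcapP reach]; exists S => // R HR.
by have := reach R HR; rewrite inE.
Qed.

Lemma le_plus_trans C1 C2 C3 :
  le_plus u v isc C1 C2 -> le_plus u v isc C2 C3 -> le_plus u v isc C1 C3.
Proof.
move=> /le_plusP [S HS reachS] /le_plusP [T HT reachT].
apply/existsP; exists T; rewrite HT; apply/bigcapP => R HR.
by rewrite inE; exact: connect_trans (reachS R HR) (reachT S HS).
Qed.

Lemma le_plus_mutual_sim C1 C2 :
  le_plus u v isc C1 C2 -> le_plus u v isc C2 C1 ->
  exists S T, [/\ S \in C2, T \in C1 & sim u v S T].
Proof.
move=> /le_plusP [S HS reachS] /le_plusP [T HT reachT].
by exists S, T; split => //; apply: carrow_sim; [apply: reachT | apply: reachS].
Qed.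

Lemma le_plus_antisym C1 C2 : C1 \in Eq u v isc -> C2 \in Eq u v isc ->
  le_plus u v isc C1 C2 -> le_plus u v isc C2 C1 -> C1 = C2.
Proof.
move=> /EqP [R1 _ ->] /EqP [R2 _ ->] le12 le21.
have [S [T [/sim_classP R2S /sim_classP R1T ST]]] := le_plus_mutual_sim le12 le21.
apply: sim_class_eq.
exact: sim_trans R1T (sim_trans (sim_sym ST) (sim_sym R2S)).
Qed.

End PlusOrder.

Theorem proposition5p2 (V A : finType) (u v : A -> V) (isc : A -> bool) :
  (* antisymmetry of <=^oplus on Eq *)
  (forall C1 C2, C1 \in Eq u v isc -> C2 \in Eq u v isc ->
     le_plus u v isc C1 C2 -> le_plus u v isc C2 C1 -> C1 = C2) /\
  (* transitivity of <=^oplus on Eq *)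
  (forall C1 C2 C3, C1 \in Eq u v isc -> C2 \in Eq u v isc -> C3 \in Eq u v isc ->
     le_plus u v isc C1 C2 -> le_plus u v isc C2 C3 -> le_plus u v isc C1 C3) /\
  (* <^oplus is a strict partial order on Eq: irreflexive ... *)
  (forall C, C \in Eq u v isc -> ~~ lt_plus u v isc C C) /\
  (* ... and transitive *)
  (forall C1 C2 C3, C1 \in Eq u v isc -> C2 \in Eq u v isc -> C3 \in Eq u v isc ->
     lt_plus u v isc C1 C2 -> lt_plus u v isc C2 C3 -> lt_plus u v isc C1 C3).
Proof.
split; first exact: le_plus_antisym.
split; first by move=> C1 C2 C3 _ _ _; apply: le_plus_trans.
split; first by move=> C _; rewrite /lt_plus eqxx andbF.
move=> C1 C2 C3 H1 H2 _ /andP [le12 ne12] /andP [le23 _].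
rewrite /lt_plus (le_plus_trans le12 le23); apply/eqP => E13.
(* C1 = C3 makes C1 and C2 mutually comparable, hence equal. *)
rewrite -E13 in le23.
by rewrite (le_plus_antisym H1 H2 le12 le23) eqxx in ne12.
Qed.
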